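(* Let $n,m,v\ge1$, let $\Omega$ be a simple witness for a memory system $S(n,m,v)$, let $\lambda$ be a permutation of $\mathbb{N}_m$, and let $\tau,\tau'$ be unambiguous traces of $S(n,m,v)$ with $\tau'=\lambda^l(\tau)$. Then for all $1\le x,y\le|\tau|$ and all $1\le i\le m$: $\langle x,y\rangle\in\Omega^e(\tau,i)$ if and only if $\langle x,y\rangle\in\Omega^e(\tau',\lambda(i))$.
   Context: $\mathbb{N}_n=\{1,\dots,n\}$, $\mathbb{W}_v=\{0,\dots,v\}$. Memory events $E(n,m,v)=\{R,W\}\times\mathbb{N}_n\times\mathbb{N}_m\times\mathbb{W}_v$; for $e=\langle a,b,c,d\rangle$, $op(e)=a$, $proc(e)=b$, $loc(e)=c$, $data(e)=d$; $0$ models the initial value of every location. A memory system $S(n,m,v)$ is a regular set of finite runs over an alphabet containing $E(n,m,v)$ (other letters being internal events); a trace is the subsequence of memory events of a run. For a sequence $\tau$ of memory events: $L(\tau,j)=\{k: loc(\tau(k))=j\}$, $L^w(\tau,j)=\{k\in L(\tau,j): op(\tau(k))=W\}$. A trace $\tau$ is unambiguous if for every location $j$ and $x\in L^w(\tau,j)$, $data(\tau(x))\ne0$ and $data(\tau(x))\ne data(\tau(y))$ for all $y\in L^w(\tau,j)\setminus\{x\}$. A witness $\Omega$ assigns to each trace $\tau$ and location $j$ a strict total order $\Omega(\tau,j)$ on $L^w(\tau,j)$; it is simple if $\langle x,y\rangle\in\Omega(\tau,j)$ iff $x<y$, for all $x,y\in L^w(\tau,j)$. For unambiguous $\tau$,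 $\Omega^e(\tau,j)\subseteq L(\tau,j)^2$: $\langle x,y\rangle\in\Omega^e(\tau,j)$ iff (1) $data(\tau(x))=data(\tau(y))$, $op(\tau(x))=W$, $op(\tau(y))=R$; or (2) $data(\tau(x))=0$ and $data(\tau(y))\ne0$; or (3) there are $a,b\in L^w(\tau,j)$ with $\langle a,b\rangle\in\Omega(\tau,j)$, $data(\tau(a))=data(\tau(x))$, $data(\tau(b))=data(\tau(y))$. For a permutation $\lambda$ of $\mathbb{N}_m$, $\lambda^l(\langle a,b,c,d\rangle)=\langle a,b,\lambda(c),d\rangle$, extended letterwise to sequences. *)

From mathcomp Require Import all_boot.
From mathcomp Require Import perm.
Set Implicit Arguments. Unset Strict Implicit. Unset Printing Implicit Defensive.

(* Convention: process p in N_n is represented by (p-1) : 'I_n,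
   location j in N_m by (j-1) : 'I_m, data d in W_v = {0..v} by d : 'I_v.+1
   (so data value 0 is literally the ordinal 0).
   Trace positions are 1-based: tau(k) = nth _ tau (k-1), 1 <= k <= size tau. *)

Inductive mop := R | W.

Record event (n m v : nat) := Ev {
  op : mop; proc : 'I_n; loc : 'I_m; data : 'I_v.+1 }.

Record dfa (Sigma : Type) := Dfa {
  dfa_state : finType;
  dfa_start : dfa_state;
  dfa_final : pred dfa_state;
  dfa_trans : dfa_state -> Sigma -> dfa_state }.

Definition dfa_accepts (Sigma : Type) (M : dfa Sigma) (w : seq Sigma) : bool :=
  @dfa_final _ M (foldl (@dfa_trans _ M) (@dfa_start _ M) w).

Definition regular (Sigma : Type) (L : seq Sigma -> Prop) : Prop :=
  exists M : dfa Sigma, forall w, L w <-> dfa_accepts M w.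

(* Runs of a memory system are over the alphabet E(n,m,v) + internal events A. *)
Definition trace_of n m v (A : Type) (r : seq (event n m v + A)) : seq (event n m v) :=
  pmap (fun a => match a with inl e => Some e | inr _ => None end) r.

Definition memory_system n m v (A : Type) (S : seq (event n m v + A) -> Prop) : Prop :=
  regular S.

Definition is_trace n m v (A : Type) (S : seq (event n m v + A) -> Prop)
  (tau : seq (event n m v)) : Prop :=
  exists r, S r /\ trace_of r = tau.

Section Traces.
Variables n m v : nat.
Implicit Types tau : seq (event n m v).

Definition ev_at tau (k : nat) (e : event n m v) : Prop :=
  1 <= k /\ onth tau k.-1 = Some e.

Definition inL tau (j : 'I_m) (k : nat) : Prop :=
  exists e, ev_at tau k e /\ loc e = j.

Definition inLw tau (j : 'I_m) (k : nat) : Prop :=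
  exists e, ev_at tau k e /\ loc e = j /\ op e = W.

Definition unambiguous tau : Prop :=
  forall (j : 'I_m) (x : nat) (ex : event n m v),
    ev_at tau x ex -> loc ex = j -> op ex = W ->
    nat_of_ord (data ex) <> 0 /\
    forall (y : nat) (ey : event n m v), ev_at tau y ey -> loc ey = j -> op ey = W ->
      y <> x -> data ex <> data ey.

End Traces.

Definition witness_rel n m v := seq (event n m v) -> 'I_m -> nat -> nat -> Prop.

Definition strict_total_on n m v (tau : seq (event n m v)) (j : 'I_m)
  (O : nat -> nat -> Prop) : Prop :=
  (forall x y, O x y -> inLw tau j x /\ inLw tau j y) /\
  (forall x, ~ O x x) /\
  (forall x y z, O x y -> O y z -> O x z) /\
  (forall x y, inLw tau j x -> inLw tau j y -> x <> y -> O x y \/ O y x).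

Definition is_witness n m v (A : Type) (S : seq (event n m v + A) -> Prop)
  (Om : witness_rel n m v) : Prop :=
  forall tau, is_trace S tau -> forall j, strict_total_on tau j (Om tau j).

Definition is_simple_witness n m v (A : Type) (S : seq (event n m v + A) -> Prop)
  (Om : witness_rel n m v) : Prop :=
  is_witness S Om /\
  forall tau, is_trace S tau -> forall j x y, inLw tau j x -> inLw tau j y ->
    (Om tau j x y <-> x < y).

Definition Omega_e n m v (Om : witness_rel n m v) (tau : seq (event n m v))
  (j : 'I_m) (x y : nat) : Prop :=
  exists ex ey, ev_at tau x ex /\ ev_at tau y ey /\ loc ex = j /\ loc ey = j /\
  ( (data ex = data ey /\ op ex = W /\ op ey = R)
  \/ (nat_of_ord (data ex) = 0 /\ nat_of_ord (data ey) <> 0)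
  \/ (exists a b ea eb, ev_at tau a ea /\ ev_at tau b eb /\
        loc ea = j /\ op ea = W /\ loc eb = j /\ op eb = W /\
        Om tau j a b /\ data ea = data ex /\ data eb = data ey) ).

Definition relabel n m v (lam : {perm 'I_m}) (e : event n m v) : event n m v :=
  Ev (op e) (proc e) (lam (loc e)) (data e).

From mathcomp Require Import all_boot perm.

(* Relabelling locations keeps positions, operations and data, so it carries
   each defining clause of Omega^e at [i] to the same clause at [lam i]. The
   only clause that consults the witness compares two writes, and a simple
   witness orders the writes of every trace by position, in [tau] and in
   [tau'] alike. The converse direction is the same argument for [lam^-1]. *)

Lemma simple_witness_transfer n m v (A : Type) (S : seq (event n m v + A) -> Prop)
    (Om : witness_rel n m v) tau tau' j j' a b :
  is_simple_witness S Om -> is_trace S tau -> is_trace S tau' ->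
  (forall k, inLw tau j k -> inLw tau' j' k) ->
  inLw tau j a -> inLw tau j b -> Om tau j a b -> Om tau' j' a b.
Proof.
move=> [_ simple] htau htau' hw ha hb.
by move/(simple _ htau _ _ _ ha hb)/(simple _ htau' _ _ _ (hw _ ha) (hw _ hb)).
Qed.

Section Relabel.

Variables n m v : nat.
Variable lam : {perm 'I_m}.

Local Notation rl := (relabel (n := n) (v := v) lam).

Lemma relabelK : cancel rl (relabel lam^-1).
Proof. by case=> o p l d; rewrite /relabel /= permK. Qed.

Lemma ev_at_relabel tau k e : ev_at tau k e -> ev_at (map rl tau) k (rl e).
Proof. by rewrite /ev_at onth_map => -[-> ->]. Qed.

Lemma inLw_relabel tau j k : inLw tau j k -> inLw (map rl tau) (lam j) k.
Proof.
by case=> e [he [le oe]]; exists (rl e); rewrite /= le oe; split=> //; apply: ev_at_relabel.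
Qed.

Lemma Omega_e_relabel (Om : witness_rel n m v) tau i x y :
  (forall a b, inLw tau i a -> inLw tau i b ->
     Om tau i a b -> Om (map rl tau) (lam i) a b) ->
  Omega_e Om tau i x y -> Omega_e Om (map rl tau) (lam i) x y.
Proof.
move=> Om_rl [ex [ey [hx [hy [lx [ly clauses]]]]]].
exists (rl ex), (rl ey); rewrite /= lx ly.
do 2 (split; first exact: ev_at_relabel); do 2 (split; first by []).
case: clauses => [same_data|[init|]]; [by left | by right; left |].
case=> a [b [ea [eb [ha [hb [la [oa [lb [ob [hab [da db]]]]]]]]]]].
right; right; exists a, b, (rl ea), (rl eb); rewrite /= la lb.
do 2 (split; first exact: ev_at_relabel).
do 4 (split; first by []); split=> //.
by apply: Om_rl hab; [exists ea | exists eb].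
Qed.

End Relabel.

Theorem lemma7p4 (n m v : nat) (hn : 1 <= n) (hm : 1 <= m) (hv : 1 <= v)
  (A : finType) (S : seq (event n m v + A) -> Prop) (hS : memory_system S)
  (Om : witness_rel n m v) (hOm : is_simple_witness S Om)
  (lam : {perm 'I_m}) (tau tau' : seq (event n m v))
  (htau : is_trace S tau) (htau' : is_trace S tau')
  (hu : unambiguous tau) (hu' : unambiguous tau')
  (hrel : tau' = map (relabel (v:=v) (n:=n) lam) tau) :
  forall (x y : nat), 1 <= x <= size tau -> 1 <= y <= size tau ->
  forall i : 'I_m, Omega_e Om tau i x y <-> Omega_e Om tau' (lam i) x y.
Proof.
move=> x y _ _ i.
have tauE : tau = map (relabel lam^-1) tau' by rewrite hrel mapK //; apply: relabelK.
split.
- rewrite hrel; apply: Omega_e_relabel => a b.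
  apply: simple_witness_transfer hOm htau _ _; first by rewrite -hrel.
  exact: inLw_relabel.
- move=> h'; rewrite tauE -[X in Omega_e _ _ X](permK lam i).
  apply: Omega_e_relabel h' => a b.
  apply: simple_witness_transfer hOm htau' _ _; first by rewrite -tauE.
  exact: inLw_relabel.
Qed.
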